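(* Let $p,q\ge 0$ be integers and let $\lambda=(p+1,1^{q})$. Let $z_{-q},\dots,z_p\in\mathbb{C}$ with $\Re(z_k)\ge 1$ for all $-q\le k\le p$, $\Re(z_p)>1$ and $\Re(z_{-q})>1$, and let ${\pmb s}\in T(\lambda,\mathbb{C})$ have first row $z_0,z_1,\dots,z_p$ and first column $z_0,z_{-1},\dots,z_{-q}$ (i.e. $s_{1,j}=z_{j-1}$, $s_{i,1}=z_{-(i-1)}$). Then $$\zeta_{\lambda}({\pmb s})=\sum_{j=0}^{p}(-1)^j\,\zeta(z_{j},\ldots,z_{1},z_0,z_{-1},\ldots,z_{-q})\,\zeta^{\star}(z_{j+1},\ldots,z_{p}),$$ where $\zeta^{\star}(z_{j+1},\ldots,z_{p})$ is interpreted as $1$ when $j=p$.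
   Context: Euler–Zagier multiple zeta-function and its star variant: $\zeta(s_1,\ldots,s_r)=\sum_{0<m_1<\cdots<m_r}m_1^{-s_1}\cdots m_r^{-s_r}$ and $\zeta^{\star}(s_1,\ldots,s_r)=\sum_{0<m_1\le\cdots\le m_r}m_1^{-s_1}\cdots m_r^{-s_r}$. For a partition $\lambda$, $T(\lambda,X)$ denotes the set of fillings of the Young diagram of $\lambda$ by elements of $X$, and $\mathrm{SSYT}(\lambda)$ is the set of semi-standard Young tableaux $M=(m_{ij})\in T(\lambda,\mathbb{N})$, i.e. weakly increasing along rows and strictly increasing down columns. For ${\pmb s}=(s_{ij})\in T(\lambda,\mathbb{C})$ the Schur multiple zeta-function is $\zeta_\lambda({\pmb s})=\sum_{M\in\mathrm{SSYT}(\lambda)}\prod_{(i,j)\in\lambda}m_{ij}^{-s_{ij}}$. The content of box $(i,j)$ is $j-i$; content-parametrized means $s_{ij}=z_{j-i}$. *)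

From Stdlib Require Import Reals ZArith List Bool Arith.
From Coquelicot Require Import Coquelicot.
Import ListNotations.
Open Scope R_scope.

(** m^(-s) for a positive integer m and s in C, i.e. exp(-s log m):
    with s = a + i b,  m^(-s) = e^(-a log m) (cos(b log m) - i sin(b log m)). *)
Definition cpow_neg (m : nat) (s : C) : C :=
  (exp (- (Re s) * ln (INR m)) * cos (Im s * ln (INR m)),
   - (exp (- (Re s) * ln (INR m)) * sin (Im s * ln (INR m)))).

Definition zconv (u : nat -> C) : Prop :=
  exists l : C, filterlim u eventually (locally l).
Definition zlim (u : nat -> C) : C :=
  @iota C_CompleteNormedModule (fun l : C => filterlim u eventually (locally l)).

Fixpoint csum (f : nat -> C) (N : nat) : C :=
  match N with
  | O => RtoC 0
  | S n => Cplus (csum f n) (f (S n))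
  end.

(** Truncated Euler-Zagier multiple zeta, argument list given REVERSED:
    mzv_tr [s_r; ...; s_1] N = sum_{0<m_1<...<m_r<=N} m_1^-s_1 ... m_r^-s_r *)
Fixpoint mzv_tr (rs : list C) (N : nat) : C :=
  match rs with
  | [] => RtoC 1
  | x :: rs' => csum (fun m => Cmult (cpow_neg m x) (mzv_tr rs' (m - 1)%nat)) N
  end.

(** Truncated star variant: sum_{0<m_1<=...<=m_r<=N} *)
Fixpoint mzs_tr (rs : list C) (N : nat) : C :=
  match rs with
  | [] => RtoC 1
  | x :: rs' => csum (fun m => Cmult (cpow_neg m x) (mzs_tr rs' m)) N
  end.

(** zeta(s_1,...,s_r) and zeta^star(s_1,...,s_r), as limits of the partial
    sums with m_r <= N (zeta^star() = zeta() = 1 for the empty list). *)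
Definition MZV (s : list C) : C := zlim (mzv_tr (rev s)).
Definition MZS (s : list C) : C := zlim (mzs_tr (rev s)).

(** Young diagrams: a partition lam = [lam_1; lam_2; ...]; boxes (i,j) are
    1-indexed with 1 <= i <= length lam, 1 <= j <= lam_i. *)
Definition in_diagram (lam : list nat) (i j : nat) : bool :=
  (1 <=? i)%nat && (i <=? length lam)%nat &&
  (1 <=? j)%nat && (j <=? nth (i - 1) lam 0%nat)%nat.

Definition boxes (lam : list nat) : list (nat * nat) :=
  flat_map (fun i => map (fun j => (i, j)) (seq 1 (nth (i - 1) lam 0%nat)))
           (seq 1 (length lam)).

Definition is_ssyt (lam : list nat) (M : nat -> nat -> nat) : bool :=
  forallb (fun b : nat * nat => let (i, j) := b in
     (1 <=? M i j)%nat
     && (negb (in_diagram lam i (S j)) || (M i j <=? M i (S j))%nat)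
     && (negb (in_diagram lam (S i) j) || (M i j <? M (S i) j)%nat))
   (boxes lam).

Fixpoint all_lists (N k : nat) : list (list nat) :=
  match k with
  | O => [[]]
  | S k' => flat_map (fun m => map (cons m) (all_lists N k')) (seq 1 N)
  end.

Fixpoint assign (bs : list (nat * nat)) (ms : list nat) (i j : nat) : nat :=
  match bs, ms with
  | b :: bs', m :: ms' =>
      if (Nat.eqb (fst b) i && Nat.eqb (snd b) j) then m else assign bs' ms' i j
  | _, _ => 0%nat
  end.

Definition Csum_list (l : list C) : C := fold_right Cplus (RtoC 0) l.
Definition Cprod_list (l : list C) : C := fold_right Cmult (RtoC 1) l.

(** Truncated Schur multiple zeta: sum over M in SSYT(lam) with all entries
    <= N of prod_{(i,j) in lam} m_ij^(-s_ij).  s : nat -> nat -> C represents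
    an element of T(lam, C) (only its values on the boxes matter). *)
Definition schur_tr (lam : list nat) (s : nat -> nat -> C) (N : nat) : C :=
  Csum_list
    (map (fun ms =>
            let M := assign (boxes lam) ms in
            if is_ssyt lam M then
              Cprod_list (map (fun b : nat * nat =>
                                 cpow_neg (M (fst b) (snd b)) (s (fst b) (snd b)))
                              (boxes lam))
            else RtoC 0)
         (all_lists N (length (boxes lam)))).

Definition SchurZeta (lam : list nat) (s : nat -> nat -> C) : C :=
  zlim (schur_tr lam s).

Definition hook (p q : nat) : list nat := S p :: repeat 1%nat q.

From Stdlib Require Import Reals ZArith List Lia Lra Bool.
From Coquelicot Require Import Coquelicot.
Import ListNotations.
Open Scope R_scope.
Set Bullet Behavior "Strict Subproofs".

(* The Schur multiple zeta of a hook runs over a weakly increasing first row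
   [r_0 <= r_1 <= ... <= r_p] together with a strictly increasing column
   [r_0 < c_1 < ... < c_q].  Expanding the product in the j-th summand of the
   right-hand side, truncated at N, runs over
   [r_j < ... < r_1 < r_0 < c_1 < ... < c_q] and [r_(j+1) <= ... <= r_p], with
   the same monomial.  So the identity already holds for the truncated sums,
   at the level of indicator functions of the index tuples: comparing r_0 with
   r_1 makes the alternating sum of indicators telescope.  Letting N go to
   infinity, each truncated multiple zeta converges because its partial sums
   grow at most like a power of [1 + ln N] while the outermost exponent has
   real part > 1. *)

Lemma Csum_list_app l1 l2 :
  Csum_list (l1 ++ l2) = Cplus (Csum_list l1) (Csum_list l2).
Proof. induction l1; simpl. ring. rewrite IHl1. ring. Qed.

Lemma Csum_list_plus {A} (f g : A -> C) l :
  Csum_list (map (fun x => Cplus (f x) (g x)) l) =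
  Cplus (Csum_list (map f l)) (Csum_list (map g l)).
Proof. induction l; simpl. ring. rewrite IHl. ring. Qed.

Lemma Csum_list_scal {A} (c : C) (f : A -> C) l :
  Csum_list (map (fun x => Cmult c (f x)) l) = Cmult c (Csum_list (map f l)).
Proof. induction l; simpl. ring. rewrite IHl. ring. Qed.

Lemma Csum_list_scal_r {A} (f : A -> C) c l :
  Csum_list (map (fun x => Cmult (f x) c) l) = Cmult (Csum_list (map f l)) c.
Proof. induction l; simpl. ring. rewrite IHl. ring. Qed.

Lemma Csum_list_ext_in {A} (f g : A -> C) l :
  (forall x, In x l -> f x = g x) -> Csum_list (map f l) = Csum_list (map g l).
Proof. induction l; simpl; intros H. auto. rewrite H, IHl; auto. Qed.

Lemma Csum_list_zero {A} (l : list A) : Csum_list (map (fun _ => RtoC 0) l) = RtoC 0.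
Proof. induction l; simpl. auto. rewrite IHl. ring. Qed.

Lemma Csum_list_swap {A B} (F : A -> B -> C) l1 l2 :
  Csum_list (map (fun x => Csum_list (map (fun y => F x y) l2)) l1) =
  Csum_list (map (fun y => Csum_list (map (fun x => F x y) l1)) l2).
Proof.
  induction l1; simpl.
  - rewrite Csum_list_zero. auto.
  - rewrite IHl1, <- Csum_list_plus. auto.
Qed.

Lemma Csum_list_flat_map {A B} (f : B -> C) (g : A -> list B) l :
  Csum_list (map f (flat_map g l)) = Csum_list (map (fun x => Csum_list (map f (g x))) l).
Proof. induction l; simpl. auto. rewrite map_app, Csum_list_app, IHl. auto. Qed.

Lemma Csum_list_seq_restrict M N g : (M <= N)%nat ->
  Csum_list (map (fun m => if (m <=? M)%nat then g m else RtoC 0) (seq 1 N)) =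
  Csum_list (map g (seq 1 M)).
Proof.
  intros H. replace N with (M + (N - M))%nat by lia.
  rewrite seq_app, map_app, Csum_list_app.
  rewrite (Csum_list_ext_in _ g (seq 1 M)).
  2:{ intros x Hx. apply in_seq in Hx. destruct (Nat.leb_spec x M); auto; lia. }
  rewrite (Csum_list_ext_in _ (fun _ => RtoC 0) (seq (1 + M) (N - M))).
  2:{ intros x Hx. apply in_seq in Hx. destruct (Nat.leb_spec x M); auto; lia. }
  rewrite Csum_list_zero. ring.
Qed.

Lemma csum_seq f N : csum f N = Csum_list (map f (seq 1 N)).
Proof.
  induction N. reflexivity.
  rewrite seq_S, map_app, Csum_list_app, <- IHN. simpl. ring.
Qed.

Lemma Cprod_list_app l1 l2 :
  Cprod_list (l1 ++ l2) = Cmult (Cprod_list l1) (Cprod_list l2).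
Proof. induction l1; simpl. ring. rewrite IHl1. ring. Qed.

Lemma Cprod_list_ext_in {A} (f g : A -> C) l :
  (forall x, In x l -> f x = g x) -> Cprod_list (map f l) = Cprod_list (map g l).
Proof. induction l; simpl; intros H. auto. rewrite H, IHl; auto. Qed.

Definition sum_lists (N k : nat) (f : list nat -> C) : C :=
  Csum_list (map f (all_lists N k)).

Lemma sum_lists_0 N f : sum_lists N 0 f = f [].
Proof. unfold sum_lists; simpl. ring. Qed.

Lemma sum_lists_S N k f : sum_lists N (S k) f =
  Csum_list (map (fun m => sum_lists N k (fun l => f (m :: l))) (seq 1 N)).
Proof.
  unfold sum_lists; simpl. rewrite Csum_list_flat_map.
  apply Csum_list_ext_in. intros. rewrite map_map. auto.
Qed.

Lemma in_all_lists N k l : In l (all_lists N k) ->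
  length l = k /\ List.Forall (fun x => (1 <= x <= N)%nat) l.
Proof.
  revert l; induction k; simpl; intros l H.
  - destruct H as [<-|[]]. auto.
  - apply in_flat_map in H as [m [Hm Hl]].
    apply in_map_iff in Hl as [l' [<- Hl']].
    apply in_seq in Hm. destruct (IHk _ Hl'). simpl. split; auto.
    constructor; auto; lia.
Qed.

Lemma sum_lists_ext_in N k f g :
  (forall l, length l = k -> List.Forall (fun x => (1 <= x <= N)%nat) l -> f l = g l) ->
  sum_lists N k f = sum_lists N k g.
Proof.
  intros H. apply Csum_list_ext_in. intros l Hl.
  destruct (in_all_lists _ _ _ Hl). auto.
Qed.

Lemma sum_lists_ext N k f g : (forall l, f l = g l) -> sum_lists N k f = sum_lists N k g.
Proof. intros; apply sum_lists_ext_in; auto. Qed.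

Lemma sum_lists_scal N k c f :
  sum_lists N k (fun l => Cmult c (f l)) = Cmult c (sum_lists N k f).
Proof. apply Csum_list_scal. Qed.

Lemma sum_lists_swap N k1 k2 F :
  sum_lists N k1 (fun l1 => sum_lists N k2 (fun l2 => F l1 l2)) =
  sum_lists N k2 (fun l2 => sum_lists N k1 (fun l1 => F l1 l2)).
Proof. apply Csum_list_swap. Qed.

Lemma Csum_list_sum_lists {A} N k (l : list A) F :
  Csum_list (map (fun j => sum_lists N k (F j)) l) =
  sum_lists N k (fun r => Csum_list (map (fun j => F j r) l)).
Proof. apply Csum_list_swap. Qed.

Lemma sum_lists_app N a b f :
  sum_lists N (a + b) f = sum_lists N a (fun l1 => sum_lists N b (fun l2 => f (l1 ++ l2))).
Proof.
  revert f; induction a; intros f; simpl.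
  - rewrite sum_lists_0. auto.
  - rewrite !sum_lists_S. apply Csum_list_ext_in; intros. rewrite IHa. auto.
Qed.

Lemma sum_lists_rev N k f : sum_lists N k f = sum_lists N k (fun l => f (rev l)).
Proof.
  revert f; induction k; intros f.
  - rewrite !sum_lists_0. auto.
  - symmetry. rewrite sum_lists_S.
    transitivity (Csum_list (map (fun m => sum_lists N k (fun l => f (l ++ [m]))) (seq 1 N))).
    + apply Csum_list_ext_in; intros. rewrite (IHk (fun l => f (l ++ [x]))). auto.
    + replace (S k) with (k + 1)%nat by lia. rewrite sum_lists_app.
      unfold sum_lists at 2.
      rewrite (Csum_list_ext_in _ (fun l1 => Csum_list (map (fun m => f (l1 ++ [m])) (seq 1 N)))).
      2:{ intros. rewrite sum_lists_S. apply Csum_list_ext_in; intros.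
          rewrite sum_lists_0. auto. }
      apply Csum_list_swap.
Qed.

Definition all_le (M : nat) (l : list nat) : bool := forallb (fun x => (x <=? M)%nat) l.

Lemma all_le_weaken M M' l : (M <= M')%nat -> all_le M l = true -> all_le M' l = true.
Proof.
  unfold all_le. rewrite !forallb_forall. intros H H1 x Hx.
  specialize (H1 x Hx). apply Nat.leb_le in H1. apply Nat.leb_le. lia.
Qed.

Lemma sum_lists_restrict N M k g : (M <= N)%nat ->
  sum_lists N k (fun l => if all_le M l then g l else RtoC 0) = sum_lists M k g.
Proof.
  intros HM; revert g; induction k; intros g.
  - rewrite !sum_lists_0. auto.
  - rewrite !sum_lists_S, <- (Csum_list_seq_restrict M N) by auto.
    apply Csum_list_ext_in; intros m _. simpl.
    destruct (m <=? M)%nat; simpl.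
    + apply IHk.
    + apply Csum_list_zero.
Qed.

Fixpoint chainb (R : nat -> nat -> bool) (l : list nat) : bool :=
  match l with
  | a :: t => match t with b :: _ => R a b && chainb R t | [] => true end
  | [] => true
  end.

Definition strict_decr := chainb (fun a b => (b <? a)%nat).
Definition weak_decr := chainb (fun a b => (b <=? a)%nat).
Definition strict_incr := chainb (fun a b => (a <? b)%nat).
Definition weak_incr := chainb (fun a b => (a <=? b)%nat).

Lemma chainb_cons2 R a b t : chainb R (a :: b :: t) = R a b && chainb R (b :: t).
Proof. reflexivity. Qed.

Lemma chainb_nth R l : chainb R l = true <->
  (forall k, (S k < length l)%nat -> R (nth k l 0%nat) (nth (S k) l 0%nat) = true).
Proof.
  induction l as [|a [|b t] IH]; [simpl; split; intros; auto; lia ..|].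
  rewrite chainb_cons2, andb_true_iff, IH. split.
  - intros [H1 H2] [|k] Hk; [exact H1|]. apply H2. simpl in *. lia.
  - intros H. split.
    + apply (H 0%nat). simpl; lia.
    + intros k Hk. apply (H (S k)). simpl in *; lia.
Qed.

Lemma chainb_rev R l : chainb R (rev l) = chainb (fun a b => R b a) l.
Proof.
  apply eq_true_iff_eq. rewrite !chainb_nth, length_rev. split; intros H k Hk.
  - specialize (H (length l - S (S k))%nat ltac:(lia)).
    rewrite !rev_nth in H by lia.
    replace (length l - S (length l - S (S k)))%nat with (S k) in H by lia.
    replace (length l - S (S (length l - S (S k))))%nat with k in H by lia. exact H.
  - specialize (H (length l - S (S k))%nat ltac:(lia)).
    rewrite !rev_nth by lia.
    replace (length l - S k)%nat with (S (length l - S (S k))) by lia. exact H.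
Qed.

Lemma strict_decr_rev l : strict_decr (rev l) = strict_incr l.
Proof. apply chainb_rev. Qed.

Lemma weak_decr_rev l : weak_decr (rev l) = weak_incr l.
Proof. apply chainb_rev. Qed.

Lemma chainb_all_le (R : nat -> nat -> bool) :
  (forall a b, R a b = true -> (b <= a)%nat) ->
  forall t b, chainb R (b :: t) = true -> all_le b t = true.
Proof.
  intros HR; induction t as [|a t IH]; intros b H; [reflexivity|].
  rewrite chainb_cons2 in H. apply andb_true_iff in H as [Hba%HR Ht].
  apply andb_true_iff. split.
  - apply Nat.leb_le; auto.
  - apply (all_le_weaken a); auto.
Qed.

Lemma strict_decr_cons m l : (1 <= m)%nat ->
  strict_decr (m :: l) = all_le (m - 1) l && strict_decr l.
Proof.
  intros Hm. destruct l as [|b t]; [reflexivity|].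
  unfold strict_decr. rewrite chainb_cons2.
  change (all_le (m - 1) (b :: t)) with ((b <=? m - 1)%nat && all_le (m - 1) t).
  destruct (chainb _ (b :: t)) eqn:E; [|rewrite !andb_false_r; auto].
  assert (Hbt : all_le b t = true).
  { apply (chainb_all_le (fun a b => (b <? a)%nat)); auto.
    intros a c Hc. apply Nat.ltb_lt in Hc. lia. }
  rewrite !andb_true_r.
  destruct (Nat.ltb_spec b m); destruct (Nat.leb_spec b (m - 1)); simpl; try lia; auto.
  symmetry. apply (all_le_weaken b); auto; lia.
Qed.

Lemma weak_decr_cons m l : weak_decr (m :: l) = all_le m l && weak_decr l.
Proof.
  destruct l as [|b t]; [reflexivity|].
  unfold weak_decr. rewrite chainb_cons2.
  change (all_le m (b :: t)) with ((b <=? m)%nat && all_le m t).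
  destruct (chainb _ (b :: t)) eqn:E; [|rewrite !andb_false_r; auto].
  assert (Hbt : all_le b t = true).
  { apply (chainb_all_le (fun a b => (b <=? a)%nat)); auto.
    intros a c Hc. apply Nat.leb_le in Hc. lia. }
  rewrite !andb_true_r.
  destruct (Nat.leb_spec b m); simpl; auto.
  symmetry. apply (all_le_weaken b); auto.
Qed.

(** * Truncated multiple zeta values as sums over tuples *)

Fixpoint cpow_prod (xs : list C) (l : list nat) : C :=
  match xs, l with
  | x :: xs', m :: l' => Cmult (cpow_neg m x) (cpow_prod xs' l')
  | _, _ => RtoC 1
  end.

Lemma cpow_prod_app xs1 xs2 l1 l2 : length xs1 = length l1 ->
  cpow_prod (xs1 ++ xs2) (l1 ++ l2) = Cmult (cpow_prod xs1 l1) (cpow_prod xs2 l2).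
Proof.
  revert l1; induction xs1; intros [|m l1] H; simpl in *; try lia.
  - ring.
  - rewrite IHxs1 by lia. ring.
Qed.

Lemma cpow_prod_rev xs l : length xs = length l -> cpow_prod (rev xs) (rev l) = cpow_prod xs l.
Proof.
  revert l; induction xs; intros [|m l] H; simpl in *; try lia; auto.
  rewrite cpow_prod_app by (rewrite !length_rev; lia). rewrite IHxs by lia. simpl. ring.
Qed.

Lemma cpow_prod_map_seq f a n l : length l = n ->
  cpow_prod (map f (seq a n)) l =
  Cprod_list (map (fun j => cpow_neg (nth (j - a) l 0%nat) (f j)) (seq a n)).
Proof.
  revert a l; induction n; intros a [|m l] Hl; simpl in *; try lia; auto.
  rewrite Nat.sub_diag, IHn by lia. simpl. f_equal.
  apply Cprod_list_ext_in. intros x Hx. apply in_seq in Hx.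
  replace (x - a)%nat with (S (x - S a)) by lia. reflexivity.
Qed.

Lemma mzv_tr_sum_lists rs N : mzv_tr rs N =
  sum_lists N (length rs) (fun l => if strict_decr l then cpow_prod rs l else RtoC 0).
Proof.
  revert N; induction rs as [|x rs IH]; intros N.
  - rewrite sum_lists_0. reflexivity.
  - simpl mzv_tr. rewrite csum_seq. simpl length. rewrite sum_lists_S.
    apply Csum_list_ext_in; intros m Hm. apply in_seq in Hm.
    rewrite IH, <- (sum_lists_restrict N (m - 1)), <- sum_lists_scal by lia.
    apply sum_lists_ext; intros l. rewrite strict_decr_cons by lia.
    destruct (all_le (m - 1) l), (strict_decr l); simpl; ring.
Qed.

Lemma mzs_tr_sum_lists rs N : mzs_tr rs N =
  sum_lists N (length rs) (fun l => if weak_decr l then cpow_prod rs l else RtoC 0).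
Proof.
  revert N; induction rs as [|x rs IH]; intros N.
  - rewrite sum_lists_0. reflexivity.
  - simpl mzs_tr. rewrite csum_seq. simpl length. rewrite sum_lists_S.
    apply Csum_list_ext_in; intros m Hm. apply in_seq in Hm.
    rewrite IH, <- (sum_lists_restrict N m), <- sum_lists_scal by lia.
    apply sum_lists_ext; intros l. rewrite weak_decr_cons.
    destruct (all_le m l), (weak_decr l); simpl; ring.
Qed.

Lemma mzv_tr_mult_mzs_tr p q X Y j N :
  length X = S p -> length Y = q -> (j <= p)%nat ->
  Cmult (mzv_tr (rev (rev (firstn (S j) X) ++ Y)) N) (mzs_tr (rev (skipn (S j) X)) N)
  = sum_lists N (S p) (fun r => sum_lists N q (fun c =>
      if strict_incr (rev (firstn (S j) r) ++ c) && weak_incr (skipn (S j) r)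
      then Cmult (cpow_prod X r) (cpow_prod Y c) else RtoC 0)).
Proof.
  intros LX LY Hj.
  assert (LF : length (firstn (S j) X) = S j) by (rewrite length_firstn; lia).
  assert (LS : length (skipn (S j) X) = (p - j)%nat) by (rewrite length_skipn; lia).
  rewrite mzv_tr_sum_lists, mzs_tr_sum_lists.
  rewrite !length_rev, length_app, length_rev, LF, LY, LS.
  set (F1 := fun l => if strict_decr l
                      then cpow_prod (rev (rev (firstn (S j) X) ++ Y)) l else RtoC 0).
  set (F2 := fun l => if weak_decr l then cpow_prod (rev (skipn (S j) X)) l else RtoC 0).
  rewrite (sum_lists_rev N (S j + q)), sum_lists_app, (sum_lists_rev N (S j)),
    (sum_lists_rev N (p - j) F2), Cmult_comm, <- sum_lists_scal.
  replace (S p) with (S j + (p - j))%nat at 1 by lia. rewrite sum_lists_app.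
  apply sum_lists_ext_in; intros a La _.
  rewrite <- sum_lists_scal.
  transitivity (sum_lists N q (fun c => sum_lists N (p - j) (fun b =>
                  Cmult (F1 (rev (rev a ++ c))) (F2 (rev b))))).
  { apply sum_lists_ext; intros c. rewrite Cmult_comm, <- sum_lists_scal. reflexivity. }
  rewrite sum_lists_swap.
  apply sum_lists_ext_in; intros b Lb _.
  apply sum_lists_ext_in; intros c Lc _.
  rewrite <- La, firstn_app, skipn_app, Nat.sub_diag, firstn_all, skipn_all,
    firstn_O, skipn_O, app_nil_r. simpl app.
  unfold F1, F2.
  rewrite strict_decr_rev, weak_decr_rev, !rev_app_distr, !rev_involutive.
  rewrite <- (firstn_skipn (S j) X) at 3.
  rewrite cpow_prod_rev, cpow_prod_app, cpow_prod_rev, cpow_prod_app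
    by (rewrite ?length_rev; lia).
  destruct (strict_incr (rev a ++ c)), (weak_incr b); simpl; ring.
Qed.

(** * Semi-standard tableaux of hook shape *)

Ltac case_nat_cmp := repeat match goal with
  | |- context [Nat.leb ?a ?b] => destruct (Nat.leb_spec a b)
  | |- context [Nat.ltb ?a ?b] => destruct (Nat.ltb_spec a b)
  | H : context [Nat.leb ?a ?b] |- _ => destruct (Nat.leb_spec a b)
  | H : context [Nat.ltb ?a ?b] |- _ => destruct (Nat.ltb_spec a b)
  end.

Lemma length_hook p q : length (hook p q) = S q.
Proof. simpl. rewrite repeat_length. reflexivity. Qed.

Lemma nth_hook p q i : (1 <= i)%nat ->
  nth (i - 1) (hook p q) 0%nat =
  if (i <=? 1)%nat then S p else if (i <=? S q)%nat then 1%nat else 0%nat.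
Proof.
  intros Hi. destruct i as [|[|i]]; try lia; [reflexivity|].
  replace (S (S i) - 1)%nat with (S i) by lia. simpl nth.
  destruct (Nat.leb_spec (S (S i)) (S q)).
  - apply (repeat_spec q). apply nth_In. rewrite repeat_length. lia.
  - apply nth_overflow. rewrite repeat_length. lia.
Qed.

Lemma in_diagram_hook p q i j : in_diagram (hook p q) i j = true <->
  ((i = 1 /\ 1 <= j <= S p) \/ (2 <= i <= S q /\ j = 1))%nat.
Proof.
  unfold in_diagram. rewrite !andb_true_iff, !Nat.leb_le, length_hook. split.
  - intros [[[H1 H2] H3] H4]. rewrite nth_hook in H4 by lia. revert H4.
    case_nat_cmp; lia.
  - intros H. rewrite nth_hook by lia. case_nat_cmp; lia.
Qed.

Lemma boxes_hook p q : boxes (hook p q) =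
  map (fun j => (1%nat, j)) (seq 1 (S p)) ++ map (fun i => (i, 1%nat)) (seq 2 q).
Proof.
  unfold boxes. rewrite length_hook. change (seq 1 (S q)) with (1%nat :: seq 2 q).
  cbn [flat_map]. f_equal.
  transitivity (flat_map (fun i => [(i, 1%nat)]) (seq 2 q)).
  - rewrite !flat_map_concat_map. f_equal. apply map_ext_in. intros i Hi. apply in_seq in Hi.
    rewrite nth_hook by lia. case_nat_cmp; try lia. reflexivity.
  - generalize 2%nat. induction q as [|q IHq]; intros n; simpl; f_equal; auto.
Qed.

Lemma in_boxes_hook p q i j : In (i, j) (boxes (hook p q)) <->
  ((i = 1 /\ 1 <= j <= S p) \/ (2 <= i <= S q /\ j = 1))%nat.
Proof.
  rewrite boxes_hook, in_app_iff, !in_map_iff. split.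
  - intros [[x [E H]]|[x [E H]]]; apply in_seq in H; inversion E; subst; lia.
  - intros [[-> H]|[H ->]]; [left; exists j|right; exists i]; rewrite in_seq; split; auto; lia.
Qed.

Lemma is_ssyt_hook_iff p q M : is_ssyt (hook p q) M = true <->
  (forall i j, In (i, j) (boxes (hook p q)) -> (1 <= M i j)%nat) /\
  (forall j, (1 <= j <= p)%nat -> (M 1%nat j <= M 1%nat (S j))%nat) /\
  (forall i, (1 <= i <= q)%nat -> (M i 1%nat < M (S i) 1%nat)%nat).
Proof.
  unfold is_ssyt. rewrite forallb_forall. split.
  - intros H. repeat split.
    + intros i j Hb. specialize (H _ Hb). simpl in H.
      apply andb_true_iff in H as [[H _]%andb_true_iff _]. apply Nat.leb_le; auto.
    + intros j Hj. assert (Hb : In (1%nat, j) (boxes (hook p q))) by (apply in_boxes_hook; lia).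
      specialize (H _ Hb). simpl in H.
      apply andb_true_iff in H as [[_ [H|H]%orb_true_iff]%andb_true_iff _].
      * assert (in_diagram (hook p q) 1 (S j) = true) by (apply in_diagram_hook; lia).
        rewrite H0 in H. discriminate.
      * apply Nat.leb_le; auto.
    + intros i Hi. assert (Hb : In (i, 1%nat) (boxes (hook p q))) by (apply in_boxes_hook; lia).
      specialize (H _ Hb). simpl in H.
      apply andb_true_iff in H as [_ [H|H]%orb_true_iff].
      * assert (in_diagram (hook p q) (S i) 1 = true) by (apply in_diagram_hook; lia).
        rewrite H0 in H. discriminate.
      * apply Nat.ltb_lt; auto.
  - intros [Hpos [Hrow Hcol]] [i j] Hb. pose proof Hb as Hij. apply in_boxes_hook in Hij.
    rewrite !andb_true_iff, !orb_true_iff, negb_true_iff, negb_true_iff,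
      Nat.leb_le, Nat.leb_le, Nat.ltb_lt.
    split; [split|].
    + apply Hpos; auto.
    + destruct (in_diagram (hook p q) i (S j)) eqn:E; [right|left; reflexivity].
      apply in_diagram_hook in E. destruct E as [[-> Hj]|]; [apply Hrow|]; lia.
    + destruct (in_diagram (hook p q) (S i) j) eqn:E; [right|left; reflexivity].
      apply in_diagram_hook in E. destruct E as [|[Hi ->]]; [lia|]. apply Hcol. lia.
Qed.

(* A list of entries is placed on the hook as first row [r], then the rest
   [c] of the first column, top to bottom. *)
Lemma assign_row a n r rest rest' j : length r = n -> (a <= j < a + n)%nat ->
  assign (map (fun j => (1%nat, j)) (seq a n) ++ rest) (r ++ rest') 1 j = nth (j - a) r 0%nat.
Proof.
  revert a r; induction n; intros a [|m r] Hr Hj; simpl in *; try lia.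
  destruct (Nat.eqb_spec a j).
  - subst. rewrite Nat.sub_diag. reflexivity.
  - rewrite IHn by lia. replace (j - a)%nat with (S (j - S a)) by lia. reflexivity.
Qed.

Lemma assign_skip_row a n r rest rest' i j : length r = n -> (i <> 1 \/ j < a \/ a + n <= j)%nat ->
  assign (map (fun j => (1%nat, j)) (seq a n) ++ rest) (r ++ rest') i j = assign rest rest' i j.
Proof.
  revert a r; induction n; intros a [|m r] Hr Hj; simpl in *; try lia; auto.
  destruct (Nat.eqb_spec a j).
  - subst. destruct i as [|[|i]]; simpl; try lia; rewrite IHn; auto; lia.
  - rewrite andb_false_r, IHn; auto; lia.
Qed.

Lemma assign_col a n c i : length c = n -> (a <= i < a + n)%nat ->
  assign (map (fun i => (i, 1%nat)) (seq a n)) c i 1 = nth (i - a) c 0%nat.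
Proof.
  revert a c; induction n; intros a [|m c] Hr Hi; simpl in *; try lia.
  destruct (Nat.eqb_spec a i); simpl.
  - subst. rewrite Nat.sub_diag. reflexivity.
  - rewrite IHn by lia. replace (i - a)%nat with (S (i - S a)) by lia. reflexivity.
Qed.

Section HookFilling.
Variables (p q : nat) (r c : list nat).
Hypotheses (Lr : length r = S p) (Lc : length c = q).

Let M := assign (boxes (hook p q)) (r ++ c).

Lemma assign_hook_row j : (1 <= j <= S p)%nat -> M 1 j = nth (j - 1) r 0%nat.
Proof. intros; unfold M; rewrite boxes_hook, assign_row; auto; lia. Qed.

Lemma assign_hook_col i : (2 <= i <= S q)%nat -> M i 1 = nth (i - 2) c 0%nat.
Proof.
  intros; unfold M. rewrite boxes_hook, assign_skip_row, assign_col; auto; lia.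
Qed.

Lemma is_ssyt_hook :
  List.Forall (fun x => 1 <= x)%nat (r ++ c) ->
  is_ssyt (hook p q) M = weak_incr r && strict_incr (hd 0%nat r :: c).
Proof.
  intros Hpos. rewrite List.Forall_forall in Hpos.
  assert (Hhd : hd 0%nat r = nth 0 r 0%nat) by (destruct r; reflexivity).
  apply eq_true_iff_eq. unfold weak_incr, strict_incr.
  rewrite is_ssyt_hook_iff, andb_true_iff, !chainb_nth, Hhd. split.
  - intros [_ [Hrow Hcol]]. split.
    + intros k Hk. specialize (Hrow (S k) ltac:(lia)). apply Nat.leb_le.
      rewrite !assign_hook_row in Hrow by lia.
      replace (S k - 1)%nat with k in Hrow by lia. exact Hrow.
    + intros [|k] Hk; simpl in Hk; apply Nat.ltb_lt.
      * specialize (Hcol 1%nat ltac:(lia)).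
        rewrite assign_hook_row, assign_hook_col in Hcol by lia. exact Hcol.
      * specialize (Hcol (S (S k)) ltac:(lia)).
        rewrite !assign_hook_col in Hcol by lia.
        replace (S (S k) - 2)%nat with k in Hcol by lia. exact Hcol.
  - intros [Hrow Hcol]. repeat split.
    + intros i j [[-> Hj]|[Hi ->]]%in_boxes_hook;
        [rewrite assign_hook_row|rewrite assign_hook_col]; try lia;
        apply Hpos, in_or_app; [left|right]; apply nth_In; lia.
    + intros j Hj. rewrite !assign_hook_row by lia.
      specialize (Hrow (j - 1)%nat ltac:(lia)). apply Nat.leb_le in Hrow.
      replace (S (j - 1)) with j in Hrow by lia. replace (S j - 1)%nat with j by lia.
      exact Hrow.
    + intros [|[|i]] Hi; try lia.
      * rewrite assign_hook_row, assign_hook_col by lia.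
        apply Nat.ltb_lt, (Hcol 0%nat). simpl. lia.
      * rewrite !assign_hook_col by lia.
        specialize (Hcol (S i) ltac:(simpl; lia)). apply Nat.ltb_lt in Hcol.
        replace (S (S i) - 2)%nat with i by lia. exact Hcol.
Qed.

Lemma cpow_prod_hook (s : nat -> nat -> C) :
  Cprod_list (map (fun b : nat * nat => cpow_neg (M (fst b) (snd b)) (s (fst b) (snd b)))
                  (boxes (hook p q))) =
  Cmult (cpow_prod (map (fun j => s 1%nat j) (seq 1 (S p))) r)
        (cpow_prod (map (fun i => s i 1%nat) (seq 2 q)) c).
Proof.
  rewrite boxes_hook, map_app, Cprod_list_app, !map_map, !cpow_prod_map_seq by auto.
  f_equal; apply Cprod_list_ext_in; intros x Hx; apply in_seq in Hx; simpl.
  - rewrite assign_hook_row by lia. reflexivity.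
  - rewrite assign_hook_col by lia. reflexivity.
Qed.

End HookFilling.

Lemma schur_tr_hook_sum_lists p q s N : schur_tr (hook p q) s N =
  sum_lists N (S p) (fun r => sum_lists N q (fun c =>
     if weak_incr r && strict_incr (hd 0%nat r :: c)
     then Cmult (cpow_prod (map (fun j => s 1%nat j) (seq 1 (S p))) r)
                (cpow_prod (map (fun i => s i 1%nat) (seq 2 q)) c)
     else RtoC 0)).
Proof.
  unfold schur_tr. change (Csum_list (map ?f (all_lists N ?k))) with (sum_lists N k f).
  replace (length (boxes (hook p q))) with (S p + q)%nat
    by (rewrite boxes_hook, length_app, !length_map, !length_seq; lia).
  rewrite sum_lists_app. apply sum_lists_ext_in; intros r Lr Pr.
  apply sum_lists_ext_in; intros c Lc Pc.
  rewrite is_ssyt_hook, cpow_prod_hook; auto.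
  apply Forall_app. split; eapply Forall_impl; try eassumption; simpl; lia.
Qed.

(** * The alternating identity for truncated sums *)

Definition indicator (b : bool) : C := if b then RtoC 1 else RtoC 0.

Lemma if_indicator (b : bool) (x : C) : (if b then x else RtoC 0) = Cmult (indicator b) x.
Proof. destruct b; unfold indicator; ring. Qed.

(* Induction on the row: either [x <= y] and the hook condition persists for
   the shorter row, or [y < x] and [y] moves onto the top of the column,
   which accounts for the sign change. *)
Lemma indicator_hook_alternating t : forall x c,
  indicator (weak_incr (x :: t) && strict_incr (x :: c)) =
  Csum_list (map (fun j => Cmult (RtoC ((-1) ^ j))
      (indicator (strict_incr (rev (firstn (S j) (x :: t)) ++ c)
                  && weak_incr (skipn (S j) (x :: t)))))
    (seq 0 (length (x :: t)))).
Proof.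
  induction t as [|y t IH]; intros x c.
  - simpl. destruct (strict_incr (x :: c)); unfold indicator; simpl;
      rewrite ?RtoC_mult; f_equal; ring.
  - change (seq 0 (length (x :: y :: t))) with (0%nat :: seq 1 (length (y :: t))).
    rewrite <- seq_shift, map_cons, map_map.
    change (Csum_list (?a :: ?l)) with (Cplus a (Csum_list l)).
    rewrite (Csum_list_ext_in _ (fun j => Cmult (RtoC (-1)) (Cmult (RtoC ((-1) ^ j))
      (indicator (strict_incr (rev (firstn (S j) (y :: t)) ++ x :: c)
                  && weak_incr (skipn (S j) (y :: t))))))).
    2:{ intros j _. rewrite Cmult_assoc, <- RtoC_mult. f_equal.
        change (firstn (S (S j)) (x :: y :: t)) with (x :: firstn (S j) (y :: t)).
        change (skipn (S (S j)) (x :: y :: t)) with (skipn (S j) (y :: t)).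
        simpl rev at 1. rewrite <- app_assoc. reflexivity. }
    rewrite Csum_list_scal, <- IH. simpl (rev (firstn 1 _) ++ c).
    unfold weak_incr at 1, strict_incr at 3. rewrite chainb_cons2, chainb_cons2.
    change (chainb _ (y :: t)) with (weak_incr (y :: t)).
    change (chainb _ (x :: c)) with (strict_incr (x :: c)).
    change (skipn 1 (x :: y :: t)) with (y :: t).
    destruct (weak_incr (y :: t)), (strict_incr (x :: c)); case_nat_cmp;
      unfold indicator; simpl; apply injective_projections; simpl; try lia; lra.
Qed.

Lemma hook_sum_lists_alternating p q X Y N :
  length X = S p -> length Y = q ->
  sum_lists N (S p) (fun r => sum_lists N q (fun c =>
     if weak_incr r && strict_incr (hd 0%nat r :: c)
     then Cmult (cpow_prod X r) (cpow_prod Y c) else RtoC 0))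
  = Csum_list (map (fun j => Cmult (RtoC ((-1) ^ j))
       (Cmult (mzv_tr (rev (rev (firstn (S j) X) ++ Y)) N) (mzs_tr (rev (skipn (S j) X)) N)))
     (seq 0 (S p))).
Proof.
  intros LX LY.
  rewrite (Csum_list_ext_in _ (fun j => sum_lists N (S p) (fun r => sum_lists N q (fun c =>
      Cmult (RtoC ((-1) ^ j))
        (if strict_incr (rev (firstn (S j) r) ++ c) && weak_incr (skipn (S j) r)
         then Cmult (cpow_prod X r) (cpow_prod Y c) else RtoC 0))))).
  2:{ intros j Hj. apply in_seq in Hj. rewrite (mzv_tr_mult_mzs_tr p q) by (auto; lia).
      rewrite <- sum_lists_scal. apply sum_lists_ext; intros r.
      rewrite <- sum_lists_scal. reflexivity. }
  rewrite Csum_list_sum_lists.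
  apply sum_lists_ext_in; intros [|x t] Lr _; simpl in Lr; try lia.
  rewrite Csum_list_sum_lists. apply sum_lists_ext; intros c.
  rewrite if_indicator. simpl hd. rewrite indicator_hook_alternating.
  simpl length. rewrite Lr, <- Csum_list_scal_r.
  apply Csum_list_ext_in; intros j _. rewrite if_indicator. ring.
Qed.

(** * Growth and convergence of the truncated sums *)

Lemma ln_0 : ln 0 = 0.
Proof. unfold ln. destruct (Rlt_dec 0 0) as [h|h]; [exfalso; lra|reflexivity]. Qed.

Lemma exp_monotone x y : x <= y -> exp x <= exp y.
Proof.
  intros [H|H]; [left; apply exp_increasing; exact H|right; rewrite H; reflexivity].
Qed.

Lemma ln_INR_nonneg n : 0 <= ln (INR n).
Proof.
  destruct n; [simpl; rewrite ln_0; lra|].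
  rewrite <- ln_1. apply ln_le; [lra|]. rewrite S_INR. pose proof (pos_INR n). lra.
Qed.

Lemma ln_INR_le n m : (n <= m)%nat -> ln (INR n) <= ln (INR m).
Proof.
  intros H. destruct n; [simpl; rewrite ln_0; apply ln_INR_nonneg|].
  apply ln_le; [rewrite S_INR; pose proof (pos_INR n); lra|]. apply le_INR. auto.
Qed.

Lemma Cmod_cpow_neg m s : Cmod (cpow_neg m s) = exp (- Re s * ln (INR m)).
Proof.
  unfold Cmod, cpow_neg. simpl fst; simpl snd.
  set (E := exp (- Re s * ln (INR m))). set (t := Im s * ln (INR m)).
  replace ((E * cos t) ^ 2 + (- (E * sin t)) ^ 2) with (E ^ 2)
    by (pose proof (sin2_cos2 t) as HH; unfold Rsqr in HH; nra).
  apply sqrt_pow2. unfold E. pose proof (exp_pos (- Re s * ln (INR m))). lra.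
Qed.

Lemma Cmod_cpow_neg_le m s sig : sig <= Re s -> Cmod (cpow_neg m s) <= exp (- sig * ln (INR m)).
Proof.
  intros H. rewrite Cmod_cpow_neg. apply exp_monotone.
  pose proof (ln_INR_nonneg m). nra.
Qed.

Fixpoint rsum (f : nat -> R) (N : nat) : R :=
  match N with O => 0 | S n => rsum f n + f (S n) end.

Lemma Cmod_csum_le f N : Cmod (csum f N) <= rsum (fun m => Cmod (f m)) N.
Proof.
  induction N; simpl.
  - rewrite Cmod_0. lra.
  - eapply Rle_trans; [apply Cmod_triangle|]. lra.
Qed.

Lemma rsum_le f g N : (forall m, (1 <= m <= N)%nat -> f m <= g m) -> rsum f N <= rsum g N.
Proof.
  induction N; simpl; intros H; [lra|].
  assert (rsum f N <= rsum g N) by (apply IHN; intros; apply H; lia).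
  assert (f (S N) <= g (S N)) by (apply H; lia). lra.
Qed.

Lemma rsum_scal c f N : rsum (fun m => c * f m) N = c * rsum f N.
Proof. induction N; simpl. ring. rewrite IHN. ring. Qed.

Lemma inv_le_ln_succ_sub n : (1 <= n)%nat -> / INR (S n) <= ln (INR (S n)) - ln (INR n).
Proof.
  intros Hn. assert (1 <= INR n) by (apply (le_INR 1); auto).
  rewrite S_INR.
  assert (H0 : ln (INR n / (INR n + 1)) <= INR n / (INR n + 1) - 1).
  { pose proof (exp_ineq1_le (ln (INR n / (INR n + 1)))).
    rewrite exp_ln in H0 by (apply Rdiv_lt_0_compat; lra). lra. }
  unfold Rdiv in H0. rewrite ln_mult, ln_Rinv in H0 by (try apply Rinv_0_lt_compat; lra).
  replace (INR n * / (INR n + 1) - 1) with (- / (INR n + 1)) in H0 by (field; lra). lra.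
Qed.

Lemma harmonic_le N : rsum (fun m => / INR m) N <= 1 + ln (INR N).
Proof.
  induction N; [simpl; rewrite ln_0; lra|].
  change (rsum (fun m => / INR m) (S N)) with (rsum (fun m => / INR m) N + / INR (S N)).
  destruct N; [simpl; rewrite ln_1; lra|].
  pose proof (inv_le_ln_succ_sub (S N) ltac:(lia)). lra.
Qed.

(* Each layer of the nested sum contributes a harmonic sum [<= 1 + ln N]. *)
Lemma Cmod_csum_cpow_le (x : C) (T : nat -> C) (k d : nat) :
  1 <= Re x -> (forall m, Cmod (T m) <= (1 + ln (INR (m - d))) ^ k) ->
  forall N, Cmod (csum (fun m => Cmult (cpow_neg m x) (T m)) N) <= (1 + ln (INR N)) ^ S k.
Proof.
  intros Hx HT N. eapply Rle_trans; [apply Cmod_csum_le|].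
  apply Rle_trans with (rsum (fun m => (1 + ln (INR N)) ^ k * / INR m) N).
  - apply rsum_le. intros m Hm. rewrite Cmod_mult, Rmult_comm.
    assert (0 < INR m) by (apply lt_0_INR; lia).
    apply Rmult_le_compat; try apply Cmod_ge_0.
    + eapply Rle_trans; [apply HT|]. apply pow_incr.
      pose proof (ln_INR_nonneg (m - d)). pose proof (ln_INR_le (m - d) N ltac:(lia)). lra.
    + eapply Rle_trans; [apply (Cmod_cpow_neg_le m x 1); auto|].
      right. rewrite <- (exp_ln (INR m)) at 2 by auto. rewrite <- exp_Ropp. f_equal. ring.
  - rewrite rsum_scal. simpl. rewrite Rmult_comm. apply Rmult_le_compat_r; [|apply harmonic_le].
    pose proof (ln_INR_nonneg N).
    apply pow_le. lra.
Qed.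

Lemma Cmod_mzv_tr_le rs : List.Forall (fun y => 1 <= Re y) rs ->
  forall N, Cmod (mzv_tr rs N) <= (1 + ln (INR N)) ^ length rs.
Proof.
  induction rs as [|x rs IH]; intros HF N.
  - simpl. rewrite Cmod_1. lra.
  - inversion HF; subst.
    apply (Cmod_csum_cpow_le x (fun m => mzv_tr rs (m - 1)) (length rs) 1); auto.
Qed.

Lemma Cmod_mzs_tr_le rs : List.Forall (fun y => 1 <= Re y) rs ->
  forall N, Cmod (mzs_tr rs N) <= (1 + ln (INR N)) ^ length rs.
Proof.
  induction rs as [|x rs IH]; intros HF N.
  - simpl. rewrite Cmod_1. lra.
  - inversion HF; subst.
    apply (Cmod_csum_cpow_le x (fun m => mzs_tr rs m) (length rs) 0); auto.
    intros m. rewrite Nat.sub_0_r. auto.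
Qed.

Lemma exp_pow a k : exp a ^ k = exp (INR k * a).
Proof.
  induction k; simpl pow; [rewrite Rmult_0_l, exp_0; auto|].
  rewrite IHk, S_INR, <- exp_plus. f_equal. ring.
Qed.

Lemma one_plus_ln_le d m : 0 < d -> 1 + ln (INR m) <= (1 + / d) * exp (d * ln (INR m)).
Proof.
  intros Hd. pose proof (ln_INR_nonneg m) as HL.
  pose proof (exp_ineq1_le (d * ln (INR m))) as HE.
  set (E := exp (d * ln (INR m))) in *. set (L := ln (INR m)) in *.
  assert (L <= / d * E).
  { apply (Rmult_le_reg_l d); auto. rewrite <- Rmult_assoc, Rinv_r by lra. nra. }
  assert (0 < / d) by (apply Rinv_0_lt_compat; lra). nra.
Qed.

(* A power of the logarithm costs only half of the margin [sig - 1]. *)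
Lemma cpow_log_pow_le sig k m : 1 < sig ->
  exp (- sig * ln (INR m)) * (1 + ln (INR m)) ^ k <=
  (1 + / ((sig - 1) / 2 / (INR k + 1))) ^ k * exp (- (1 + (sig - 1) / 2) * ln (INR m)).
Proof.
  intros Hs. set (e := (sig - 1) / 2). set (d := e / (INR k + 1)).
  pose proof (pos_INR k). assert (0 < e) by (unfold e; lra).
  assert (Hd : 0 < d) by (unfold d; apply Rdiv_lt_0_compat; lra).
  pose proof (ln_INR_nonneg m) as HL.
  assert (Hpow : (1 + ln (INR m)) ^ k <= (1 + / d) ^ k * exp (INR k * (d * ln (INR m)))).
  { rewrite <- exp_pow, <- Rpow_mult_distr. apply pow_incr.
    split; [lra|]. apply one_plus_ln_le; auto. }
  assert (Hkd : INR k * d <= e).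
  { unfold d. apply (Rmult_le_reg_r (INR k + 1)); [lra|]. unfold Rdiv.
    rewrite Rmult_assoc, (Rmult_assoc e), Rinv_l by lra. nra. }
  assert (Hexp : exp (- sig * ln (INR m)) * exp (INR k * (d * ln (INR m)))
                 <= exp (- (1 + e) * ln (INR m))).
  { rewrite <- exp_plus. apply exp_monotone. unfold e in *. nra. }
  pose proof (exp_pos (- sig * ln (INR m))).
  assert (0 <= (1 + / d) ^ k) by (apply pow_le; pose proof (Rinv_0_lt_compat d Hd); lra).
  apply Rle_trans with
    (exp (- sig * ln (INR m)) * ((1 + / d) ^ k * exp (INR k * (d * ln (INR m))))).
  - apply Rmult_le_compat_l; lra.
  - nra.
Qed.

(* Comparison of [m^-(1+e)] with the telescoping [(m-1)^-e - m^-e] / e. *)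
Lemma cpow_succ_le_telescope e m : 0 < e -> (1 <= m)%nat ->
  exp (- (1 + e) * ln (INR (S m))) <=
  / e * (exp (- e * ln (INR m)) - exp (- e * ln (INR (S m)))).
Proof.
  intros He Hm. pose proof (inv_le_ln_succ_sub m Hm) as Hs.
  assert (0 < INR (S m)) by (apply lt_0_INR; lia).
  set (a := ln (INR m)) in *. set (b := ln (INR (S m))) in *.
  rewrite <- (exp_ln (INR (S m))), <- exp_Ropp in Hs by auto. fold b in Hs.
  assert (E1 : exp (- e * a) = exp (- e * b) * exp (e * (b - a)))
    by (rewrite <- exp_plus; f_equal; ring).
  assert (E2 : exp (- (1 + e) * b) = exp (- e * b) * exp (- b))
    by (rewrite <- exp_plus; f_equal; ring).
  pose proof (exp_ineq1_le (e * (b - a))).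
  rewrite E1, E2. pose proof (exp_pos (- e * b)). pose proof (exp_pos (- b)).
  assert (e * exp (- b) <= exp (e * (b - a)) - 1) by nra.
  apply (Rmult_le_reg_l e); auto.
  rewrite <- (Rmult_assoc e (/ e)), Rinv_r, Rmult_1_l by lra. nra.
Qed.

Lemma rsum_cpow_le e N : 0 < e -> rsum (fun m => exp (- (1 + e) * ln (INR m))) N <= 1 + / e.
Proof.
  intros He. assert (0 < / e) by (apply Rinv_0_lt_compat; auto).
  assert (Htel : forall n, (1 <= n)%nat ->
    rsum (fun m => exp (- (1 + e) * ln (INR m))) n + / e * exp (- e * ln (INR n)) <= 1 + / e).
  { intros n Hn. induction n; [lia|]. destruct n.
    - simpl. rewrite ln_1, !Rmult_0_r, exp_0. lra.
    - change (rsum (fun m => exp (- (1 + e) * ln (INR m))) (S (S n))) with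
        (rsum (fun m => exp (- (1 + e) * ln (INR m))) (S n)
         + exp (- (1 + e) * ln (INR (S (S n))))).
      pose proof (cpow_succ_le_telescope e (S n) He ltac:(lia)).
      specialize (IHn ltac:(lia)). lra. }
  destruct N; [simpl; lra|]. specialize (Htel (S N) ltac:(lia)).
  pose proof (exp_pos (- e * ln (INR (S N)))). nra.
Qed.

Lemma zconv_csum_of_rsum_bound f (b : nat -> R) M :
  (forall m, (1 <= m)%nat -> Cmod (f m) <= b m) ->
  (forall n, 0 <= b n) -> (forall N, rsum b N <= M) -> zconv (csum f).
Proof.
  intros Hf Hb HM.
  set (b0 := fun n => match n with O => 0 | _ => b n end).
  set (f0 := fun n => match n with O => RtoC 0 | _ => f n end).
  assert (Hsb : forall N, sum_n b0 N = rsum b N).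
  { induction N; [rewrite sum_O; reflexivity|]. rewrite sum_Sn, IHN. reflexivity. }
  assert (Hsf : forall N, sum_n f0 N = csum f N).
  { induction N; [rewrite sum_O; reflexivity|]. rewrite sum_Sn, IHN. reflexivity. }
  assert (Hb0 : ex_series b0).
  { destruct (ex_finite_lim_seq_incr (sum_n b0) M) as [l Hl].
    - intros n. rewrite sum_Sn, !Hsb. pose proof (Hb (S n)). unfold plus; simpl. lra.
    - intros n. rewrite Hsb. auto.
    - exists l. exact Hl. }
  assert (Hf0 : ex_series f0).
  { apply (@ex_series_le C_AbsRing C_CompleteNormedModule _ b0); auto.
    intros [|n]; change (norm ?x) with (Cmod x); simpl.
    - rewrite Cmod_0. lra.
    - apply Hf. lia. }
  destruct Hf0 as [l Hl]. exists l.
  eapply filterlim_ext; [|exact Hl]. intros N. apply Hsf.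
Qed.

Lemma zconv_csum_cpow x T k : 1 < Re x -> (forall m, Cmod (T m) <= (1 + ln (INR m)) ^ k) ->
  zconv (csum (fun m => Cmult (cpow_neg m x) (T m))).
Proof.
  intros Hx HT.
  set (e := (Re x - 1) / 2).
  set (K := (1 + / ((Re x - 1) / 2 / (INR k + 1))) ^ k).
  assert (HK : 0 <= K).
  { unfold K. apply pow_le. pose proof (pos_INR k).
    assert (0 < (Re x - 1) / 2 / (INR k + 1)) by (apply Rdiv_lt_0_compat; lra).
    pose proof (Rinv_0_lt_compat _ H0). lra. }
  apply (zconv_csum_of_rsum_bound _ (fun m => K * exp (- (1 + e) * ln (INR m))) (K * (1 + / e))).
  - intros m Hm. rewrite Cmod_mult.
    eapply Rle_trans; [|apply cpow_log_pow_le; auto].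
    apply Rmult_le_compat; try apply Cmod_ge_0; [|apply HT].
    apply Cmod_cpow_neg_le. lra.
  - intros n. pose proof (exp_pos (- (1 + e) * ln (INR n))). nra.
  - intros N. rewrite rsum_scal. apply Rmult_le_compat_l; auto.
    apply rsum_cpow_le. unfold e; lra.
Qed.

Lemma zconv_mzv_tr_cons x rs : 1 < Re x -> List.Forall (fun y => 1 <= Re y) rs ->
  zconv (mzv_tr (x :: rs)).
Proof.
  intros Hx HF.
  apply (zconv_csum_cpow x (fun m => mzv_tr rs (m - 1)) (length rs)); auto.
  intros m. eapply Rle_trans; [apply Cmod_mzv_tr_le; auto|].
  apply pow_incr. pose proof (ln_INR_nonneg (m - 1)).
  pose proof (ln_INR_le (m - 1) m ltac:(lia)). lra.
Qed.

Lemma zconv_mzs_tr_cons x rs : 1 < Re x -> List.Forall (fun y => 1 <= Re y) rs ->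
  zconv (mzs_tr (x :: rs)).
Proof.
  intros Hx HF.
  apply (zconv_csum_cpow x (fun m => mzs_tr rs m) (length rs)); auto.
  intros m. apply Cmod_mzs_tr_le; auto.
Qed.

(** * Passing to the limit *)

Lemma zlim_eq u l : filterlim u eventually (locally l) -> zlim u = l.
Proof.
  intros Hl. unfold zlim.
  apply (@iota_filterlim_locally C_AbsRing C_CompleteNormedModule nat eventually _ u l Hl).
Qed.

Lemma zlim_correct u : zconv u -> filterlim u eventually (locally (zlim u)).
Proof. intros [l Hl]. rewrite (zlim_eq u l Hl). exact Hl. Qed.

Lemma filterlim_Cplus (u v : nat -> C) a b :
  filterlim u eventually (locally a) -> filterlim v eventually (locally b) ->
  filterlim (fun N => Cplus (u N) (v N)) eventually (locally (Cplus a b)).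
Proof.
  intros Hu Hv. apply (filterlim_comp_2 u v Cplus Hu Hv).
  apply (@filterlim_plus C_AbsRing C_NormedModule a b).
Qed.

(* [locally] on [C] is stated for its uniform structure as a normed module,
   while [filterlim_mult] uses the one of [C] as an absolute-value ring; the
   two agree by [locally_C]. *)
Lemma filterlim_Cmult (u v : nat -> C) a b :
  filterlim u eventually (locally a) -> filterlim v eventually (locally b) ->
  filterlim (fun N => Cmult (u N) (v N)) eventually (locally (Cmult a b)).
Proof.
  intros Hu Hv.
  assert (Hu' : filterlim u eventually (@locally (AbsRing_UniformSpace C_AbsRing) a))
    by (intros Q HQ; apply Hu, locally_C, HQ).
  assert (Hv' : filterlim v eventually (@locally (AbsRing_UniformSpace C_AbsRing) b))
    by (intros Q HQ; apply Hv, locally_C, HQ).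
  intros P HP. apply (filterlim_comp_2 u v Cmult Hu' Hv' (@filterlim_mult C_AbsRing a b)).
  apply locally_C, HP.
Qed.

Lemma filterlim_Csum_list_mult (l : list nat) (c : nat -> C) (u v : nat -> nat -> C) :
  (forall j, In j l -> zconv (u j) /\ zconv (v j)) ->
  filterlim (fun N => Csum_list (map (fun j => Cmult (c j) (Cmult (u j N) (v j N))) l))
    eventually
    (locally (Csum_list (map (fun j => Cmult (c j) (Cmult (zlim (u j)) (zlim (v j)))) l))).
Proof.
  induction l as [|j l IH]; intros H; simpl; [apply filterlim_const|].
  destruct (H j (or_introl eq_refl)) as [Hu Hv].
  apply filterlim_Cplus.
  - apply filterlim_Cmult; [apply filterlim_const|].
    apply filterlim_Cmult; apply zlim_correct; auto.
  - apply IH. intros i Hi. apply H. right. exact Hi.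
Qed.

Lemma zconv_const (c : C) : zconv (fun _ => c).
Proof. exists c. apply filterlim_const. Qed.

Lemma zconv_mzv_tr_rev s : List.Forall (fun y => 1 <= Re y) s ->
  (s <> [] -> 1 < Re (last s 0)) -> zconv (mzv_tr (rev s)).
Proof.
  intros HF Hlast. destruct s as [|x s]; [exact (zconv_const (RtoC 1))|].
  rewrite (app_removelast_last 0 (l := x :: s)), rev_app_distr by discriminate.
  apply zconv_mzv_tr_cons; [apply Hlast; discriminate|].
  apply Forall_rev, (Forall_app (fun y => 1 <= Re y) _ [last (x :: s) 0]).
  rewrite <- app_removelast_last by discriminate. exact HF.
Qed.

Lemma zconv_mzs_tr_rev s : List.Forall (fun y => 1 <= Re y) s ->
  (s <> [] -> 1 < Re (last s 0)) -> zconv (mzs_tr (rev s)).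
Proof.
  intros HF Hlast. destruct s as [|x s]; [exact (zconv_const (RtoC 1))|].
  rewrite (app_removelast_last 0 (l := x :: s)), rev_app_distr by discriminate.
  apply zconv_mzs_tr_cons; [apply Hlast; discriminate|].
  apply Forall_rev, (Forall_app (fun y => 1 <= Re y) _ [last (x :: s) 0]).
  rewrite <- app_removelast_last by discriminate. exact HF.
Qed.

Lemma nth_map_seq {A} (f : nat -> A) a n k d : (k < n)%nat ->
  nth k (map f (seq a n)) d = f (a + k)%nat.
Proof.
  intros Hk. rewrite (nth_indep _ d (f 0%nat)) by (rewrite length_map, length_seq; auto).
  rewrite map_nth, seq_nth; auto.
Qed.

Lemma last_map_seq {A} (f : nat -> A) a n d : last (map f (seq a (S n))) d = f (a + n)%nat.
Proof. rewrite seq_S, map_app. apply last_last. Qed.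

Definition hook_row (z : Z -> C) (p : nat) : list C :=
  map (fun k => z (Z.of_nat k)) (seq 0 (S p)).

Definition hook_col (z : Z -> C) (q : nat) : list C :=
  map (fun i => z (- Z.of_nat i)%Z) (seq 1 q).

Lemma hook_left_args p q z j : (j <= p)%nat ->
  map (fun k => z (Z.of_nat j - Z.of_nat k)%Z) (seq 0 (j + q + 1)) =
  rev (firstn (S j) (hook_row z p)) ++ hook_col z q.
Proof.
  intros Hj.
  assert (LF : length (firstn (S j) (hook_row z p)) = S j)
    by (rewrite length_firstn; unfold hook_row; rewrite length_map, length_seq; lia).
  apply nth_ext with (d := RtoC 0) (d' := RtoC 0).
  - rewrite length_map, length_seq, length_app, length_rev, LF.
    unfold hook_col. rewrite length_map, length_seq. lia.
  - intros k Hk. rewrite length_map, length_seq in Hk. rewrite nth_map_seq by lia.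
    destruct (Nat.lt_ge_cases k (S j)).
    + rewrite app_nth1, rev_nth, LF, nth_firstn by (rewrite ?length_rev; lia).
      destruct (Nat.ltb_spec (S j - S k) (S j)); try lia.
      unfold hook_row. rewrite nth_map_seq by lia. f_equal. lia.
    + rewrite app_nth2, length_rev, LF by (rewrite length_rev; lia).
      unfold hook_col. rewrite nth_map_seq by lia. f_equal. lia.
Qed.

Lemma hook_right_args p z j : (j <= p)%nat ->
  map (fun k => z (Z.of_nat (j + 1 + k))) (seq 0 (p - j)) = skipn (S j) (hook_row z p).
Proof.
  intros Hj. apply nth_ext with (d := RtoC 0) (d' := RtoC 0).
  - rewrite length_map, length_seq, length_skipn. unfold hook_row.
    rewrite length_map, length_seq. lia.
  - intros k Hk. rewrite length_map, length_seq in Hk.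
    rewrite nth_map_seq, nth_skipn by lia. unfold hook_row. rewrite nth_map_seq by lia.
    do 2 f_equal. lia.
Qed.

Lemma schur_tr_hook_alternating p q (z : Z -> C) (s : nat -> nat -> C) N :
  (forall j : nat, (1 <= j <= S p)%nat -> s 1%nat j = z (Z.of_nat j - 1)%Z) ->
  (forall i : nat, (1 <= i <= S q)%nat -> s i 1%nat = z (- (Z.of_nat i - 1))%Z) ->
  schur_tr (hook p q) s N =
  Csum_list (map (fun j => Cmult (RtoC ((-1) ^ j))
    (Cmult (mzv_tr (rev (map (fun k => z (Z.of_nat j - Z.of_nat k)%Z) (seq 0 (j + q + 1)))) N)
           (mzs_tr (rev (map (fun k => z (Z.of_nat (j + 1 + k))) (seq 0 (p - j)))) N)))
    (seq 0 (S p))).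
Proof.
  intros Hrow Hcol.
  assert (HX : map (fun j => s 1%nat j) (seq 1 (S p)) = hook_row z p).
  { unfold hook_row. rewrite <- seq_shift, map_map. apply map_ext_in. intros k Hk.
    apply in_seq in Hk. rewrite Hrow by lia. f_equal. lia. }
  assert (HY : map (fun i => s i 1%nat) (seq 2 q) = hook_col z q).
  { unfold hook_col. rewrite <- seq_shift, map_map. apply map_ext_in. intros k Hk.
    apply in_seq in Hk. rewrite Hcol by lia. f_equal. lia. }
  rewrite schur_tr_hook_sum_lists, HX, HY, hook_sum_lists_alternating
    by (unfold hook_row, hook_col; rewrite length_map, length_seq; reflexivity).
  apply Csum_list_ext_in. intros j Hj. apply in_seq in Hj.
  rewrite (hook_left_args p), (hook_right_args p) by lia. reflexivity.
Qed.

Section HookConvergence.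
Variables (p q : nat) (z : Z -> C).
Hypothesis Hre : forall k : Z, (- Z.of_nat q <= k <= Z.of_nat p)%Z -> 1 <= Re (z k).

Lemma zconv_hook_left j : 1 < Re (z (- Z.of_nat q)%Z) -> (j <= p)%nat ->
  zconv (mzv_tr (rev (map (fun k => z (Z.of_nat j - Z.of_nat k)%Z) (seq 0 (j + q + 1))))).
Proof.
  intros Hq Hj. apply zconv_mzv_tr_rev.
  - apply Forall_forall. intros y [k [<- Hk%in_seq]]%in_map_iff. apply Hre. lia.
  - intros _. replace (j + q + 1)%nat with (S (j + q)) by lia.
    rewrite last_map_seq. replace (Z.of_nat j - Z.of_nat (0 + (j + q)))%Z
      with (- Z.of_nat q)%Z by lia. exact Hq.
Qed.

Lemma zconv_hook_right j : 1 < Re (z (Z.of_nat p)) -> (j <= p)%nat ->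
  zconv (mzs_tr (rev (map (fun k => z (Z.of_nat (j + 1 + k))) (seq 0 (p - j))))).
Proof.
  intros Hp Hj. apply zconv_mzs_tr_rev.
  - apply Forall_forall. intros y [k [<- Hk%in_seq]]%in_map_iff. apply Hre. lia.
  - intros Hne. destruct (p - j)%nat as [|n] eqn:E; [contradiction|].
    rewrite last_map_seq. replace (j + 1 + (0 + n))%nat with p by lia. exact Hp.
Qed.

End HookConvergence.

Theorem theorem3p1 (p q : nat) (z : Z -> C) (s : nat -> nat -> C) :
  (forall k : Z, (- Z.of_nat q <= k <= Z.of_nat p)%Z -> 1 <= Re (z k)) ->
  1 < Re (z (Z.of_nat p)) ->
  1 < Re (z (- Z.of_nat q)%Z) ->
  (forall j : nat, (1 <= j <= S p)%nat -> s 1%nat j = z (Z.of_nat j - 1)%Z) ->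
  (forall i : nat, (1 <= i <= S q)%nat -> s i 1%nat = z (- (Z.of_nat i - 1))%Z) ->
  let zl (j : nat) : list C :=
    map (fun k => z (Z.of_nat j - Z.of_nat k)%Z) (seq 0 (j + q + 1)) in
  let zr (j : nat) : list C :=
    map (fun k => z (Z.of_nat (j + 1 + k))) (seq 0 (p - j)) in
  zconv (schur_tr (hook p q) s) /\
  (forall j : nat, (j <= p)%nat ->
     zconv (mzv_tr (rev (zl j))) /\ zconv (mzs_tr (rev (zr j)))) /\
  SchurZeta (hook p q) s =
    Csum_list (map (fun j => Cmult (RtoC ((-1) ^ j))
                                   (Cmult (MZV (zl j)) (MZS (zr j))))
                   (seq 0 (S p))).
Proof.
  intros Hre Hp Hq Hrow Hcol zl zr.
  assert (Hconv : forall j, (j <= p)%nat ->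
                    zconv (mzv_tr (rev (zl j))) /\ zconv (mzs_tr (rev (zr j))))
    by (intros j Hj; split; [apply (zconv_hook_left p)|apply (zconv_hook_right p q)]; auto).
  assert (Hlim := filterlim_Csum_list_mult (seq 0 (S p)) (fun j => RtoC ((-1) ^ j))
                    (fun j => mzv_tr (rev (zl j))) (fun j => mzs_tr (rev (zr j)))
                    (fun j Hj => Hconv j ltac:(apply in_seq in Hj; lia))).
  apply (filterlim_ext _ _ (fun N => eq_sym (schur_tr_hook_alternating p q z s N Hrow Hcol)))
    in Hlim.
  split; [eexists; exact Hlim|]. split; [exact Hconv|].
  unfold SchurZeta. rewrite (zlim_eq _ _ Hlim). reflexivity.
Qed.
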